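(* Let $r \ge 3$ and $n \ge 2r^5$. Let $\mathcal{H}$ be an intersecting $r$-uniform $n$-vertex hypergraph with $\delta_{r-1}^+(\mathcal{H}) \ge 3$ having the maximum number of hyperedges among all intersecting $r$-uniform $n$-vertex hypergraphs with minimum positive co-degree at least $3$. Then $\mathcal{H}$ is a $3$-kernel system.
   Context: A hypergraph is intersecting if every two of its hyperedges share at least one vertex. For a non-empty $r$-uniform hypergraph $\mathcal{H}$, the minimum positive co-degree $\delta_{r-1}^+(\mathcal{H})$ is the largest integer $k$ such that every $(r-1)$-set of vertices that is contained in at least one hyperedge of $\mathcal{H}$ is contained in at least $k$ distinct hyperedges of $\mathcal{H}$; for the empty hypergraph it is $0$. Given integers $r \ge k \ge 1$, an $r$-uniform $k$-kernel system on vertex set $V$ is a hypergraph whose hyperedge set is $\{E \in \binom{V}{r} : |E \cap X| \ge k\}$ for some set $X \subseteq V$ with $|X| = 2k-1$. *)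

From mathcomp Require Import all_boot.
Set Implicit Arguments. Unset Strict Implicit. Unset Printing Implicit Defensive.

Definition hypergraph (n : nat) := {set {set 'I_n}}.

Definition uniform (n r : nat) (H : hypergraph n) : bool :=
  [forall E in H, #|E| == r].

Definition intersecting (n : nat) (H : hypergraph n) : bool :=
  [forall E in H, forall F in H, E :&: F != set0].

Definition codeg (n : nat) (H : hypergraph n) (S : {set 'I_n}) : nat :=
  #|[set E in H | S \subset E]|.

Definition in_shadow (n r : nat) (H : hypergraph n) (S : {set 'I_n}) : bool :=
  (#|S| == r.-1) && [exists E in H, S \subset E].

(* minimum positive co-degree: the largest k such that every (r-1)-set in
   some hyperedge lies in at least k hyperedges; 0 for the empty hypergraph.
   Such k never exceeds #|H| when H is nonempty (and r >= 1), so the max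
   is taken over k <= #|H|. *)
Definition min_pos_codeg (n r : nat) (H : hypergraph n) : nat :=
  if H == set0 then 0 else
  \max_(k < #|H|.+1 | [forall S, in_shadow r H S ==> (k <= codeg H S)]) k.

Definition kernel_system (n r k : nat) (H : hypergraph n) : Prop :=
  exists X : {set 'I_n}, #|X| = (2 * k).-1 /\
    H = [set E : {set 'I_n} | (#|E| == r) && (k <= #|E :&: X|)].

From mathcomp Require Import all_boot zify.
Set Implicit Arguments. Unset Strict Implicit. Unset Printing Implicit Defensive.

(* Call H admissible if it is a nonempty intersecting r-uniform
   family in which every (r-1)-subset of an edge lies in at least three edges,
   and write kernel3 X for the 3-kernel system with kernel X, #|X| = 5.
   - Local structure: if E is an edge, v in E and C hits every edge while
     meeting E only in v, then the (at least three) edges through E :\ v are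
     completed by points of C.  Hence no set of fewer than 3 vertices hits H,
     and by branching over edges #|H| is at most r^3 times the largest number
     of edges through a 3-set.
   - Each kernel3 X is itself admissible and has at least kernel_lower =
     10 C(n-5,r-3) edges, so by maximality #|H| >= kernel_lower, which for
     n >= 2 r^5 exceeds sparse_bound = 4 C(n-3,r-3) + 3 r^4 C(n-4,r-4).
   - Above sparse_bound, counting shows that two hitting 3-sets share two
     vertices; their union Y is a 4-set whose 3-subsets all hit H.  Edges
     meeting Y in exactly two vertices have pairwise intersecting parts outside
     Y; if these parts share a point e then every edge meets X := e |: Y in at
     least three vertices, and otherwise counting again gives #|H| <= sparse_bound.
   - So H is contained in kernel3 X, and maximality forces equality. *)

Lemma card_bigcup_le_sum (I T : finType) (A : {set I}) (F : I -> {set T}) :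
  #|\bigcup_(i in A) F i| <= \sum_(i in A) #|F i|.
Proof.
elim/big_rec2: _ => [|i m X _ IH]; first by rewrite cards0.
by apply: leq_trans (leq_card_setU _ X).1 _; rewrite leq_add2l.
Qed.

Lemma card_le_markers (T : finType) (G D : {set {set T}}) b :
  (forall E, E \in G -> exists2 Q, Q \in D & Q \subset E) ->
  (forall Q, Q \in D -> #|[set E in G | Q \subset E]| <= b) ->
  #|G| <= #|D| * b.
Proof.
move=> marked few.
have cover : G \subset \bigcup_(Q in D) [set E in G | Q \subset E].
  apply/subsetP=> E EG; have [Q QD QE] := marked E EG.
  by apply/bigcupP; exists Q => //; rewrite inE EG.
apply: leq_trans (subset_leq_card cover) _.
apply: leq_trans (card_bigcup_le_sum _ _) _.
by rewrite -sum_nat_const; apply: leq_sum.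
Qed.

Lemma card_le_branch (T : finType) (G : {set {set T}}) (S F : {set T}) b :
  (forall E, E \in G -> S \subset E -> exists2 x, x \in F & x \in E) ->
  (forall x, x \in F -> #|[set E in G | (x |: S) \subset E]| <= b) ->
  #|[set E in G | S \subset E]| <= #|F| * b.
Proof.
move=> meets few.
have cover : [set E in G | S \subset E] \subset
             \bigcup_(x in F) [set E in G | (x |: S) \subset E].
  apply/subsetP=> E; rewrite inE => /andP[EG SE]; have [x xF xE] := meets E EG SE.
  by apply/bigcupP; exists x => //; rewrite inE EG subUset sub1set xE SE.
apply: leq_trans (subset_leq_card cover) _.
apply: leq_trans (card_bigcup_le_sum _ _) _.
by rewrite -sum_nat_const; apply: leq_sum.
Qed.

Lemma setDUK_sub (T : finType) (S E : {set T}) : S \subset E -> (E :\: S) :|: S = E.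
Proof. by move=> SE; rewrite -{2}(setID E S) (setIidPr SE) setUC. Qed.

Lemma card_uniform_supersets (T : finType) (S : {set T}) r :
  #|[set E : {set T} | (#|E| == r) && (S \subset E)]| <= 'C(#|T| - #|S|, r - #|S|).
Proof.
have -> : #|T| - #|S| = #|~: S| by rewrite -(cardsC S) addKn.
rewrite -cards_draws.
set D := [set A : {set T} | A \subset ~: S & #|A| == r - #|S|].
have sub : [set E : {set T} | (#|E| == r) && (S \subset E)] \subset (fun A => A :|: S) @: D.
  apply/subsetP=> E; rewrite inE => /andP[/eqP Er SE].
  apply/imsetP; exists (E :\: S); last by rewrite setDUK_sub.
  rewrite inE cardsD Er (setIidPr SE) eqxx andbT.
  by apply/subsetP=> x; rewrite !inE => /andP[].
exact: leq_trans (subset_leq_card sub) (leq_imset_card _ _).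
Qed.

Lemma card_uniform_supersets_big (T : finType) (S : {set T}) r : r < #|S| ->
  #|[set E : {set T} | (#|E| == r) && (S \subset E)]| = 0.
Proof.
move=> lt; apply: eq_card0 => E; rewrite inE; apply/negP => /andP[/eqP Er SE].
by have := subset_leq_card SE; rewrite Er leqNgt lt.
Qed.

Lemma exists_subset_card (T : finType) (A : {set T}) k :
  k <= #|A| -> exists2 B : {set T}, B \subset A & #|B| = k.
Proof.
move=> kA.
have : 0 < #|[set B : {set T} | B \subset A & #|B| == k]| by rewrite cards_draws bin_gt0.
by rewrite card_gt0 => /set0Pn [B]; rewrite inE => /andP[BA /eqP Bk]; exists B.
Qed.

Lemma notin_disjoint (T : finType) (F S : {set T}) x : F :&: S = set0 -> x \in F -> x \notin S.
Proof. by move=> FS xF; apply: contra_eqN FS => xS; apply/set0Pn; exists x; rewrite inE xF. Qed.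

Lemma eq_of_card_setI (T : finType) (Q Q' : {set T}) :
  #|Q| = #|Q'| -> #|Q| <= #|Q :&: Q'| -> Q = Q'.
Proof.
move=> e le; have QQ' : Q \subset Q'.
  have QI : Q :&: Q' = Q by apply/eqP; rewrite eqEcard subsetIl.
  by rewrite -QI subsetIr.
by apply/eqP; rewrite eqEcard QQ' e leqnn.
Qed.

Definition deg3_bound n r := 'C(n - 3, r - 3).
Definition deg4_bound n r := if 4 <= r then 'C(n - 4, r - 4) else 0.
(* A 3-kernel system with |X| = 5 has at least this many edges (3 points in X). *)
Definition kernel_lower n r := 10 * 'C(n - 5, r - 3).
(* Upper bound on #|H| in each of the non-extremal configurations. *)
Definition sparse_bound n r := 4 * deg3_bound n r + 3 * r ^ 4 * deg4_bound n r.

(* Pascal's rule twice: C(n-3,r-3) <= C(n-5,r-3) + 2 C(n-4,r-4). *)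
Lemma deg3_bound_le n r : 3 <= r -> r + 5 <= n ->
  deg3_bound n r <= 'C(n - 5, r - 3) + 2 * deg4_bound n r.
Proof.
move=> r3 rn; rewrite /deg3_bound /deg4_bound; case: ifP => r4; last first.
  have -> : r = 3 by lia.
  by rewrite subnn !bin0.
have e1 : n - 3 = (n - 4).+1 by lia.
have e2 : r - 3 = (r - 4).+1 by lia.
have e3 : n - 4 = (n - 5).+1 by lia.
have pascal3 : 'C(n - 3, r - 3) = 'C(n - 4, r - 3) + 'C(n - 4, r - 4).
  by rewrite e1 e2 binS -e2.
have pascal4 : 'C(n - 4, r - 3) = 'C(n - 5, r - 3) + 'C(n - 5, r - 4).
  by rewrite e3 e2 binS -e2.
have mono : 'C(n - 5, r - 4) <= 'C(n - 4, r - 4) by apply: leq_bin2l; lia.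
by rewrite pascal3 pascal4; lia.
Qed.

(* Edges through a 4-set are rare compared with edges through a 3-set:
   (r-3) C(n-4,r-3) = (n-r) C(n-4,r-4), and n - r far exceeds r^5. *)
Lemma deg4_bound_small n r : 3 <= r -> 2 * r ^ 5 <= n ->
  (3 * r ^ 4 + 20) * deg4_bound n r < 6 * deg3_bound n r.
Proof.
move=> r3 rn; have p81 : 3 ^ 4 <= r ^ 4 by rewrite leq_exp2r.
move: rn p81; rewrite expnS; set p := r ^ 4 => rn p81.
rewrite /deg3_bound /deg4_bound; case: ifP => r4; last by rewrite muln0 muln_gt0 bin_gt0; lia.
have e1 : n - 3 = (n - 4).+1 by lia.
have e2 : r - 3 = (r - 4).+1 by lia.
have pascal : 'C(n - 3, r - 3) = 'C(n - 4, r - 3) + 'C(n - 4, r - 4).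
  by rewrite e1 e2 binS -e2.
have absorb : (r - 3) * 'C(n - 4, r - 3) = (n - r) * 'C(n - 4, r - 4).
  have := mul_bin_left (n - 4) (r - 4); rewrite -e2.
  by have -> : n - 4 - (r - 4) = n - r by lia.
have Bpos : 0 < 'C(n - 4, r - 3) by rewrite bin_gt0; lia.
rewrite pascal; move: absorb Bpos; set B := 'C(n - 4, r - 3); set u := 'C(n - 4, r - 4).
clearbody B u p => absorb Bpos.
have gap : (3 * p + 20) * (r - 3) < 6 * (n - r).
  have rp : r * 3 ^ 4 <= r * p := leq_mul (leqnn r) p81.
  have := leq_mul (leqnn (3 * p + 20)) (leq_subr 3 r).
  nia.
nia.
Qed.

Lemma sparse_bound_lt n r : 3 <= r -> 2 * r ^ 5 <= n -> sparse_bound n r < kernel_lower n r.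
Proof.
move=> r3 rn; have p81 : 3 ^ 4 <= r ^ 4 by rewrite leq_exp2r.
have rn5 : r + 5 <= n by move: rn; rewrite expnS; nia.
have := deg3_bound_le r3 rn5; have := deg4_bound_small r3 rn.
rewrite /sparse_bound /kernel_lower.
set B := deg3_bound n r; set u := deg4_bound n r; set c := 'C(n - 5, r - 3); set p := r ^ 4.
clearbody B u c p; nia.
Qed.

Definition kernel3 n r (X : {set 'I_n}) : hypergraph n :=
  [set E : {set 'I_n} | (#|E| == r) && (3 <= #|E :&: X|)].

Section KernelSystem.

Variables (n r : nat) (X : {set 'I_n}).
Hypotheses (r3 : 3 <= r) (X5 : #|X| = 5).

Lemma setI_split (Y Z : {set 'I_n}) : Y \subset X -> Z \subset ~: X -> (Y :|: Z) :&: X = Y.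
Proof.
move=> YX ZX; apply/setP => x; rewrite !inE.
case xY: (x \in Y); first by rewrite (subsetP YX x xY).
case xX: (x \in X); rewrite ?andbF // andbT.
by apply/negP => xZ; have := subsetP ZX x xZ; rewrite inE xX.
Qed.

Lemma setD_split (Y Z : {set 'I_n}) : Y \subset X -> Z \subset ~: X -> (Y :|: Z) :\: X = Z.
Proof.
move=> YX ZX; apply/setP => x; rewrite !inE.
have inX := subsetP YX x; have outX := subsetP ZX x; rewrite inE in outX.
by case: (x \in X) (x \in Y) (x \in Z) inX outX => [] [] [] //= inX outX;
  first [have := inX isT | have := outX isT].
Qed.

(* Choosing 3 of the 5 kernel vertices and r - 3 outside vertices gives
   10 * C(n-5, r-3) distinct edges. *)
Lemma kernel3_card : kernel_lower n r <= #|kernel3 r X|.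
Proof.
set Ys := [set Y : {set 'I_n} | Y \subset X & #|Y| == 3].
set Zs := [set Z : {set 'I_n} | Z \subset ~: X & #|Z| == r - 3].
have cardYs : #|Ys| = 10 by rewrite cards_draws X5.
have cardZs : #|Zs| = 'C(n - 5, r - 3).
  rewrite cards_draws; congr 'C(_, _).
  have : 5 + #|~: X| = n by rewrite -X5 cardsC card_ord.
  by set m := #|~: X|; clearbody m; lia.
set glue := fun p : {set 'I_n} * {set 'I_n} => p.1 :|: p.2.
have glue_inj : {in setX Ys Zs &, injective glue}.
  move=> [Y Z] [Y' Z']; rewrite !inE /glue /= => /andP[/andP[YX _] /andP[ZX _]]
    /andP[/andP[YX' _] /andP[ZX' _]] e.
  have eY := setI_split YX ZX; rewrite e (setI_split YX' ZX') in eY.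
  have eZ := setD_split YX ZX; rewrite e (setD_split YX' ZX') in eZ.
  by rewrite eY eZ.
rewrite /kernel_lower -cardYs -cardZs -cardsX -(card_in_imset glue_inj).
apply: subset_leq_card; apply/subsetP => E /imsetP [[Y Z]].
rewrite !inE /glue /= => /andP[/andP[YX /eqP Y3] /andP[ZX /eqP Zr]] ->.
rewrite (setI_split YX ZX) Y3 leqnn andbT cardsU.
have -> : Y :&: Z = set0.
  apply/setP => x; rewrite !inE; apply/negP => /andP[xY xZ].
  by have := subsetP ZX x xZ; rewrite inE (subsetP YX x xY).
by rewrite cards0 subn0 Y3 Zr; apply/eqP; lia.
Qed.

Lemma kernel3_uniform : uniform r (kernel3 r X).
Proof. by apply/forall_inP => E; rewrite inE => /andP[]. Qed.

(* Two 3-subsets of a 5-set meet. *)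
Lemma kernel3_intersecting : intersecting (kernel3 r X).
Proof.
apply/forall_inP => E; rewrite inE => /andP[_ EX].
apply/forall_inP => F; rewrite inE => /andP[_ FX].
have union : #|(E :&: X) :|: (F :&: X)| <= 5.
  by rewrite -X5; apply: subset_leq_card; rewrite subUset !subsetIr.
have meet : (E :&: X) :&: (F :&: X) \subset E :&: F.
  by apply/subsetP => x; rewrite !inE => /andP[/andP[-> _] /andP[-> _]].
have := subset_leq_card meet; have := cardsUI (E :&: X) (F :&: X).
rewrite -card_gt0; move: EX FX union.
set a := #|E :&: X|; set b := #|F :&: X|; set c := #|_ :|: _|; set d := #|_ :&: (F :&: X)|.
by set e := #|E :&: F|; clearbody a b c d e; lia.
Qed.

(* An (r-1)-set S inside an edge of the kernel system meets X in at least two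
   points, so it extends to an edge by at least three vertices: all of ~: S
   if #|S :&: X| >= 3, and the at least three vertices of X :\: S otherwise. *)
Lemma kernel3_extensions (S : {set 'I_n}) : r + 2 <= n -> #|S| = r.-1 ->
  (exists2 E, E \in kernel3 r X & S \subset E) ->
  exists2 W : {set 'I_n}, 3 <= #|W| & forall w, w \in W -> w \notin S /\ w |: S \in kernel3 r X.
Proof.
move=> rn S1 [E]; rewrite inE => /andP[/eqP Er EX] SE.
have ES1 : #|E :\: S| = 1 by rewrite cardsD (setIidPr SE) Er S1; lia.
have SX2 : 2 <= #|S :&: X|.
  have sub : E :&: X \subset (S :&: X) :|: (E :\: S).
    by apply/subsetP => x; rewrite !inE => /andP[-> ->]; case: (x \in S).
  have := leq_trans (subset_leq_card sub) (leq_card_setU _ _).1.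
  by rewrite ES1; move: EX; set a := #|E :&: X|; set b := #|S :&: X|; clearbody a b; lia.
have cardwS w : w \notin S -> #|w |: S| = r by move=> wS; rewrite cardsU1 wS S1; lia.
have [SX3|SX2'] := leqP 3 #|S :&: X|.
  exists (~: S).
    have := cardsC S; rewrite S1 card_ord.
    by set m := #|~: S|; clearbody m; lia.
  move=> w; rewrite inE => wS; split => //; rewrite inE cardwS // eqxx /=.
  by apply: leq_trans SX3 _; apply: subset_leq_card; apply: setSI; exact: subsetUr.
exists (X :\: S).
  by rewrite cardsD X5 setIC; move: SX2 SX2'; set b := #|S :&: X|; clearbody b; lia.
move=> w; rewrite inE => /andP[wS wX]; split => //; rewrite inE cardwS // eqxx /=.
rewrite setIUl (setIidPl _) ?sub1set // cardsU1 inE (negbTE wS) /=.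
by move: SX2 SX2'; set b := #|S :&: X|; clearbody b; lia.
Qed.

Lemma kernel3_min_pos_codeg : r + 2 <= n -> 3 <= #|kernel3 r X| ->
  3 <= min_pos_codeg r (kernel3 r X).
Proof.
move=> rn K3; set K := kernel3 r X.
have K_ne : K != set0 by rewrite -card_gt0; apply: leq_trans K3.
rewrite /min_pos_codeg (negbTE K_ne).
have three : 3 < #|K|.+1 by rewrite ltnS.
apply: (@leq_bigmax_cond _ _ _ (Ordinal three)).
apply/forallP => S; apply/implyP => /andP[/eqP S1 /exists_inP [E EK SE]].
have [W W3 ext] := kernel3_extensions rn S1 (ex_intro2 _ _ E EK SE).
apply: leq_trans W3 _.
have inj : {in W &, injective (fun w => w |: S)}.
  move=> w w' wW w'W e; have : w \in w' |: S by rewrite -e setU11.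
  by rewrite !inE (negbTE (ext w wW).1) orbF => /eqP.
rewrite /codeg -(card_in_imset inj); apply: subset_leq_card.
by apply/subsetP => F /imsetP [w wW ->]; rewrite inE (ext w wW).2 subsetUr.
Qed.

Lemma kernel3_competitor : r + 2 <= n ->
  [/\ uniform r (kernel3 r X), intersecting (kernel3 r X) & 3 <= min_pos_codeg r (kernel3 r X)].
Proof.
move=> rn; split; [exact: kernel3_uniform | exact: kernel3_intersecting |].
apply: (kernel3_min_pos_codeg rn); apply: leq_trans kernel3_card.
have : 0 < 'C(n - 5, r - 3) by rewrite bin_gt0; lia.
by rewrite /kernel_lower; lia.
Qed.

End KernelSystem.

Record admissible n r (H : hypergraph n) : Prop := Admissible {
  adm_uniform : forall E, E \in H -> #|E| = r;
  adm_intersecting : forall E F, E \in H -> F \in H -> E :&: F != set0;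
  adm_nonempty : H != set0;
  adm_codeg : forall E v, E \in H -> v \in E -> 3 <= codeg H (E :\ v) }.

(* The theorem's co-degree hypothesis unpacked: every E :\ v is in the shadow. *)
Lemma admissible_of_min_pos_codeg n r (H : hypergraph n) :
  uniform r H -> intersecting H -> 3 <= min_pos_codeg r H -> admissible r H.
Proof.
move=> /forall_inP unifH /forall_inP intH codH.
have H_ne : H != set0.
  by apply/negP => /eqP H0; move: codH; rewrite /min_pos_codeg H0 eqxx.
split => //.
- by move=> E /unifH /eqP.
- by move=> E F /intH /forall_inP; apply.
move=> E v EH vE; rewrite leqNgt; apply/negP => lt.
move: codH; rewrite /min_pos_codeg (negbTE H_ne) leqNgt => /negP; apply.
apply/bigmax_leqP => k /forall_inP /(_ (E :\ v)) kle.
have shadow : in_shadow r H (E :\ v).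
  apply/andP; split; last by apply/existsP; exists E; rewrite EH subD1set.
  by move: (cardsD1 v E); rewrite vE (eqP (unifH E EH)) add1n => ->.
by move: (kle shadow) lt; lia.
Qed.

Definition hitting n (H : hypergraph n) (C : {set 'I_n}) :=
  [forall E in H, E :&: C != set0].

Lemma hittingP n (H : hypergraph n) (C : {set 'I_n}) :
  reflect (forall E, E \in H -> E :&: C != set0) (hitting H C).
Proof. exact: forall_inP. Qed.

Lemma not_hittingP n (H : hypergraph n) (C : {set 'I_n}) :
  ~~ hitting H C -> exists2 F, F \in H & F :&: C = set0.
Proof.
rewrite negb_forall => /existsP [F]; rewrite negb_imply negbK => /andP[FH /eqP FC].
by exists F.
Qed.

Definition cover3s n (H : hypergraph n) :=
  [set Q : {set 'I_n} | (#|Q| == 3) && hitting H Q].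

Definition hitting_quad n (H : hypergraph n) (Y : {set 'I_n}) :=
  #|Y| = 4 /\ forall T : {set 'I_n}, T \subset Y -> #|T| = 3 -> hitting H T.

Section AdmissibleFamily.

Variables (n r : nat) (H : hypergraph n).
Hypothesis HA : admissible r H.

Lemma link_extra_card (E F : {set 'I_n}) v : E \in H -> v \in E -> F \in H -> E :\ v \subset F ->
  #|F :\: (E :\ v)| = 1.
Proof.
move=> EH vE FH sub.
rewrite cardsD (setIidPr sub) (adm_uniform HA FH).
have := cardsD1 v E; rewrite vE (adm_uniform HA EH) add1n => ->.
by rewrite subSnn.
Qed.

Lemma link_completions_ge3 (E A : {set 'I_n}) v : E \in H -> v \in E ->
  (forall F, F \in H -> E :\ v \subset F -> F :\: (E :\ v) \subset A) -> 3 <= #|A|.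
Proof.
move=> EH vE inA; apply: leq_trans (adm_codeg HA EH vE) _.
rewrite /codeg; set S := E :\ v.
have sub : [set F in H | S \subset F] \subset (fun w => w |: S) @: A.
  apply/subsetP=> F; rewrite inE => /andP[FH SF].
  have /cards1P [w Fw] : #|F :\: S| == 1 by rewrite (link_extra_card EH vE FH SF).
  apply/imsetP; exists w; first by have := inA F FH SF; rewrite Fw sub1set.
  by rewrite -Fw setDUK_sub.
exact: leq_trans (subset_leq_card sub) (leq_imset_card _ _).
Qed.

(* A hitting set C meeting E only in v contains the vertex completing E :\ v
   to any edge F: F must be hit outside E :\ v. *)
Lemma link_completion_in_hitting (E F C : {set 'I_n}) v : E \in H -> v \in E ->
  F \in H -> E :\ v \subset F -> hitting H C ->
  (forall x, x \in C -> x \in E -> x = v) -> F :\: (E :\ v) \subset C.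
Proof.
move=> EH vE FH sub /hittingP hitC CE.
have /cards1P [w Fw] : #|F :\: (E :\ v)| == 1 by rewrite (link_extra_card EH vE FH sub).
have /set0Pn [y] := hitC F FH; rewrite inE => /andP[yF yC].
have yS : y \notin E :\ v.
  by rewrite !inE; apply/negP => /andP[yv yE]; move: yv; rewrite (CE y yC yE) eqxx.
have : y \in F :\: (E :\ v) by rewrite inE yS yF.
by rewrite Fw inE => /eqP yw; rewrite sub1set -yw.
Qed.

Lemma hitting_local_ge3 (E C : {set 'I_n}) v : E \in H -> v \in E ->
  hitting H C -> (forall x, x \in C -> x \in E -> x = v) -> 3 <= #|C|.
Proof.
move=> EH vE hitC CE; apply: (link_completions_ge3 EH vE) => F FH sub.
exact: link_completion_in_hitting EH vE FH sub hitC CE.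
Qed.

Lemma hitting_local_meet3 (E C1 C2 : {set 'I_n}) v : E \in H -> v \in E ->
  hitting H C1 -> (forall x, x \in C1 -> x \in E -> x = v) ->
  hitting H C2 -> (forall x, x \in C2 -> x \in E -> x = v) -> 3 <= #|C1 :&: C2|.
Proof.
move=> EH vE hit1 C1E hit2 C2E; apply: (link_completions_ge3 EH vE) => F FH sub.
by rewrite subsetI (link_completion_in_hitting EH vE FH sub hit1 C1E)
  (link_completion_in_hitting EH vE FH sub hit2 C2E).
Qed.

(* A 3-element hitting set meeting E only in v: every w in it completes E :\ v
   to an edge, since otherwise the completions would fit into 2 vertices. *)
Lemma hitting3_completions (E C : {set 'I_n}) v w : E \in H -> v \in E ->
  hitting H C -> (forall x, x \in C -> x \in E -> x = v) -> #|C| = 3 -> w \in C ->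
  w |: (E :\ v) \in H.
Proof.
move=> EH vE hitC CE C3 wC; apply/negPn/negP => wE.
have : 3 <= #|C :\ w|.
  apply: (link_completions_ge3 EH vE) => F FH sub.
  have /cards1P [y Fy] : #|F :\: (E :\ v)| == 1 by rewrite (link_extra_card EH vE FH sub).
  move: (link_completion_in_hitting EH vE FH sub hitC CE).
  rewrite Fy !sub1set !inE => ->; rewrite andbT.
  by apply/negP => /eqP yw; apply: (negP wE); rewrite -yw -Fy setDUK_sub.
by move: (cardsD1 w C); rewrite wC C3; lia.
Qed.

(* No set of fewer than three vertices hits H: if some edge meets C in one
   vertex use hitting_local_ge3, otherwise C lies in every edge and any of its
   points hits H alone. *)
Lemma hitting_card_ge3 (C : {set 'I_n}) : hitting H C -> 3 <= #|C|.
Proof.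
move=> hitC; rewrite leqNgt; apply/negP => small.
have [E EH] : exists E, E \in H by apply/set0Pn; exact: adm_nonempty HA.
have [/exists_inP [F FH /cards1P [v Fv]] | /exists_inP no_single] :=
  boolP [exists F in H, #|F :&: C| == 1].
  have /setIP [vF vC] : v \in F :&: C by rewrite Fv set11.
  have CF x : x \in C -> x \in F -> x = v by move=> xC xF; apply/set1P; rewrite -Fv inE xF xC.
  by have := hitting_local_ge3 FH vF hitC CF; rewrite leqNgt small.
have C_in_edges F : F \in H -> C \subset F.
  move=> FH; have meet := (hittingP _ _ hitC) F FH.
  have not1 : #|F :&: C| != 1 by apply/negP => h; apply: no_single; exists F.
  have pos : 0 < #|F :&: C| by rewrite card_gt0.
  have le : #|F :&: C| <= #|C| by apply: subset_leq_card; rewrite subsetIr.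
  have FC : F :&: C = C.
    apply/eqP; rewrite eqEcard subsetIr /=; move/eqP: not1; move: pos le small.
    by set k := #|F :&: C|; set c := #|C|; clearbody k c; lia.
  by rewrite -FC subsetIl.
have [b bC] : exists b, b \in C.
  by apply/set0Pn; apply: contraNneq ((hittingP _ _ hitC) E EH) => ->; rewrite setI0.
have hit_b : hitting H [set b].
  apply/hittingP => F FH; apply/set0Pn; exists b.
  by rewrite !inE eqxx andbT (subsetP (C_in_edges F FH)).
have := hitting_local_ge3 EH (subsetP (C_in_edges E EH) b bC) hit_b.
by rewrite cards1 => /(_ (fun x xb _ => set1P xb)).
Qed.

Lemma codeg_le_uniform (G : hypergraph n) (Q : {set 'I_n}) : G \subset H ->
  codeg G Q <= #|[set E : {set 'I_n} | (#|E| == r) && (Q \subset E)]|.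
Proof.
move=> GH; apply: subset_leq_card; apply/subsetP => E; rewrite !inE => /andP[EG ->].
by rewrite (adm_uniform HA (subsetP GH E EG)) eqxx.
Qed.

Lemma codeg3_le (G : hypergraph n) (Q : {set 'I_n}) : G \subset H -> #|Q| = 3 ->
  codeg G Q <= deg3_bound n r.
Proof.
move=> GH Q3; apply: leq_trans (codeg_le_uniform Q GH) _.
by apply: leq_trans (card_uniform_supersets _ _) _; rewrite card_ord Q3.
Qed.

Lemma codeg4_le (G : hypergraph n) (Q : {set 'I_n}) : G \subset H -> #|Q| = 4 ->
  codeg G Q <= deg4_bound n r.
Proof.
move=> GH Q4; apply: leq_trans (codeg_le_uniform Q GH) _.
rewrite /deg4_bound; case: ifP => r4.
  by apply: leq_trans (card_uniform_supersets _ _) _; rewrite card_ord Q4.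
by rewrite card_uniform_supersets_big // Q4 ltnNge r4.
Qed.

(* Branching over an edge F avoiding S: every edge through S meets F. *)
Lemma codeg_branch (G : hypergraph n) (S F : {set 'I_n}) b :
  G \subset H -> F \in H ->
  (forall x, x \in F -> codeg G (x |: S) <= b) -> codeg G S <= r * b.
Proof.
move=> GH FH few; rewrite -(adm_uniform HA FH); apply: card_le_branch => // E EG _.
have /set0Pn [x] := adm_intersecting HA (subsetP GH E EG) FH.
by rewrite inE => /andP[xE xF]; exists x.
Qed.

(* A 3-set not hitting H lies in at most r * deg4_bound edges: branch over an
   edge disjoint from it. *)
Lemma codeg_not_hitting3 (Q : {set 'I_n}) : #|Q| = 3 -> ~~ hitting H Q ->
  codeg H Q <= r * deg4_bound n r.
Proof.
move=> Q3 /not_hittingP [F FH FQ]; apply: codeg_branch (subxx H) FH _ => x xF.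
apply: (codeg4_le (subxx H)); rewrite cardsU1 Q3.
by rewrite (negPf (notin_disjoint FQ xF)).
Qed.

(* Since no set of fewer than 3 vertices hits H, branching three times from the
   empty set bounds a subfamily by r^3 times the largest codegree of a 3-set. *)
Lemma card_le_codeg3 (G : hypergraph n) b : G \subset H ->
  (forall Q : {set 'I_n}, #|Q| = 3 -> codeg G Q <= b) -> #|G| <= r ^ 3 * b.
Proof.
move=> GH few.
have branch j (S : {set 'I_n}) : #|S| + j = 3 -> codeg G S <= r ^ j * b.
  elim: j S => [|j IH] S Sj; first by rewrite mul1n; apply: few; rewrite -Sj addn0.
  have : ~~ hitting H S by apply/negP => /hitting_card_ge3; lia.
  case/not_hittingP => F FH FS; rewrite expnS -mulnA; apply: codeg_branch GH FH _ => x xF.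
  by apply: IH; rewrite cardsU1 (negPf (notin_disjoint FS xF)) -Sj addnS.
have := branch 3 set0; rewrite cards0 => /(_ erefl).
suff -> : codeg G set0 = #|G| by [].
by apply: eq_card => E; rewrite inE sub0set andbT.
Qed.

(* Two hitting 3-sets sharing two vertices span a 4-set all of whose 3-subsets
   hit H: a 3-subset T missing an edge E would leave a single vertex p of the
   4-set in E, and then the two 3-sets would share 3 vertices by
   hitting_local_meet3. *)
Lemma hitting_quad_of_pair (Q1 Q2 : {set 'I_n}) : Q1 \in cover3s H -> Q2 \in cover3s H ->
  #|Q1 :&: Q2| = 2 -> hitting_quad H (Q1 :|: Q2).
Proof.
rewrite !inE => /andP[/eqP Q13 hit1] /andP[/eqP Q23 hit2] Q12.
set Y := Q1 :|: Q2.
have Y4 : #|Y| = 4 by rewrite cardsU Q13 Q23 Q12.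
split => // T TY T3; apply/negPn/negP => /not_hittingP [E EH ET].
have [p Yp] : exists p, Y :\: T = [set p].
  by apply/cards1P; rewrite cardsD (setIidPr TY) Y4 T3.
have YE x : x \in Y -> x \in E -> x = p.
  move=> xY xE; apply/set1P; rewrite -Yp inE xY andbT.
  exact: notin_disjoint ET xE.
have pE : p \in E.
  have /set0Pn [y] := (hittingP _ _ hit1) E EH; rewrite inE => /andP[yE yQ].
  by rewrite -(YE y _ yE) // inE yQ.
have := hitting_local_meet3 EH pE hit1 (fun x xQ => YE x (subsetP (subsetUl Q1 Q2) x xQ))
  hit2 (fun x xQ => YE x (subsetP (subsetUr Q1 Q2) x xQ)).
by rewrite Q12.
Qed.

(* A hitting 3-set Q0 disjoint from another hitting 3-set Q lies in few edges:
   branch over the three vertices of Q. *)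
Lemma codeg_disjoint_hitting3 (Q0 Q : {set 'I_n}) : Q0 \in cover3s H -> Q \in cover3s H ->
  Q :&: Q0 = set0 -> codeg H Q0 <= 3 * deg4_bound n r.
Proof.
rewrite !inE => /andP[/eqP Q03 _] /andP[/eqP Q3 hitQ] QQ0.
rewrite -Q3; apply: card_le_branch => [E EH _|x xQ].
  have /set0Pn [x] := (hittingP _ _ hitQ) E EH.
  by rewrite inE => /andP[xE xQ]; exists x.
apply: (codeg4_le (subxx H)); rewrite cardsU1 Q03.
by rewrite (negPf (notin_disjoint QQ0 xQ)).
Qed.

(* If two distinct hitting 3-sets meet the hitting 3-set Q0 in the same single
   point p, then every edge through Q0 contains a point of (Q1 :|: Q2) :\ p
   (otherwise Q1 and Q2 would share 3 points), so Q0 lies in few edges. *)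
Lemma codeg_two_hitting3_same_point (Q0 Q1 Q2 : {set 'I_n}) p :
  Q0 \in cover3s H -> Q1 \in cover3s H -> Q2 \in cover3s H -> Q1 != Q2 ->
  Q1 :&: Q0 = [set p] -> Q2 :&: Q0 = [set p] -> codeg H Q0 <= 4 * deg4_bound n r.
Proof.
rewrite !inE => /andP[/eqP Q03 _] /andP[/eqP Q13 hit1] /andP[/eqP Q23 hit2] Q1Q2 e1 e2.
have /setIP [pQ1 pQ0] : p \in Q1 :&: Q0 by rewrite e1 set11.
have /setIP [pQ2 _] : p \in Q2 :&: Q0 by rewrite e2 set11.
set F := (Q1 :|: Q2) :\ p.
have F4 : #|F| <= 4.
  have := cardsUI Q1 Q2; have := cardsD1 p (Q1 :|: Q2); rewrite inE pQ1 /=.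
  have : 0 < #|Q1 :&: Q2| by rewrite card_gt0; apply/set0Pn; exists p; rewrite inE pQ1.
  rewrite Q13 Q23 /F; set a := #|Q1 :|: Q2|; set b := #|Q1 :&: Q2|; set c := #|_ :\ p|.
  by clearbody a b c; lia.
apply: leq_trans (_ : #|F| * deg4_bound n r <= _); last by rewrite leq_mul2r F4 orbT.
apply: card_le_branch => [E EH Q0E|x].
  have [/exists_inP [x xF xE] | /exists_inP noF] := boolP [exists x in F, x \in E].
    by exists x.
  have pE : p \in E by apply: (subsetP Q0E).
  have onlyp (Q : {set 'I_n}) : Q \subset Q1 :|: Q2 -> forall x, x \in Q -> x \in E -> x = p.
    move=> QQ x xQ xE; apply/eqP/negPn/negP => xp; apply: noF; exists x => //.
    by rewrite /F in_setD1 xp (subsetP QQ x xQ).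
  have := hitting_local_meet3 EH pE hit1 (onlyp Q1 (subsetUl _ _)) hit2 (onlyp Q2 (subsetUr _ _)).
  by move=> Q1Q2_3; case/negP: Q1Q2; apply/eqP; apply: eq_of_card_setI; rewrite ?Q13 ?Q23.
rewrite /F !inE => /andP[xp xQ]; apply: (codeg4_le (subxx H)); rewrite cardsU1 Q03.
have /negPf -> // : x \notin Q0.
apply: contra xp => xQ0; apply/eqP; apply/set1P.
by case/orP: xQ => xQ; [rewrite -e1 | rewrite -e2]; rewrite inE xQ xQ0.
Qed.

(* Suppose no two hitting 3-sets share exactly two points and Q0 is heavy, i.e.
   lies in more than 4 * deg4_bound edges.  Then every other hitting 3-set meets
   Q0 in a single point, distinct ones in distinct points (by the two previous
   lemmas); so there are at most four hitting 3-sets. *)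
Lemma few_cover3s (Q0 : {set 'I_n}) :
  (forall Q1 Q2 : {set 'I_n}, Q1 \in cover3s H -> Q2 \in cover3s H -> #|Q1 :&: Q2| != 2) ->
  Q0 \in cover3s H -> 4 * deg4_bound n r < codeg H Q0 -> #|cover3s H| <= 4.
Proof.
move=> no2 Q0C heavy.
have Q03 : #|Q0| = 3 by move: Q0C; rewrite inE => /andP[/eqP].
have meet1 Q : Q \in cover3s H :\ Q0 -> #|Q :&: Q0| = 1.
  rewrite in_setD1 => /andP[QQ0 QC].
  have Q3 : #|Q| = 3 by move: QC; rewrite inE => /andP[/eqP].
  have pos : 0 < #|Q :&: Q0|.
    rewrite card_gt0; apply: contraTneq heavy => QQ0_0; rewrite -leqNgt.
    exact: leq_trans (codeg_disjoint_hitting3 Q0C QC QQ0_0) (leq_mul (leqnSn 3) (leqnn _)).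
  have le3 : #|Q :&: Q0| <= 3 by rewrite -Q3 subset_leq_card // subsetIl.
  have not3 : #|Q :&: Q0| != 3.
    by apply: contra QQ0 => /eqP QQ0_3; apply/eqP; apply: eq_of_card_setI; rewrite ?Q3 ?Q03 ?QQ0_3.
  move/eqP: (no2 Q Q0 QC Q0C); move/eqP: not3; move: pos le3.
  by set k := #|Q :&: Q0|; clearbody k; lia.
have [x0 _] : exists x0 : 'I_n, x0 \in Q0 by apply/set0Pn; rewrite -card_gt0 Q03.
pose point Q := odflt x0 [pick x in Q :&: Q0].
have pointE Q : Q \in cover3s H :\ Q0 -> Q :&: Q0 = [set point Q].
  move=> QC; have /cards1P [y Qy] : #|Q :&: Q0| == 1 by rewrite meet1.
  rewrite Qy /point; case: pickP => [z|]; first by rewrite Qy => /set1P ->.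
  by move=> /(_ y); rewrite Qy set11.
have point_inj : {in cover3s H :\ Q0 &, injective point}.
  move=> Q1 Q2 Q1C Q2C e; apply/eqP/negPn/negP => Q1Q2.
  have := pointE Q2 Q2C; rewrite -e => e2.
  move: (Q1C) (Q2C); rewrite !in_setD1 => /andP[_ C1] /andP[_ C2].
  move: heavy; rewrite ltnNge => /negP; apply.
  exact: codeg_two_hitting3_same_point Q0C C1 C2 Q1Q2 (pointE Q1 Q1C) e2.
have : #|cover3s H :\ Q0| <= 3.
  rewrite -(card_in_imset point_inj) -Q03; apply: subset_leq_card.
  apply/subsetP => x /imsetP [Q QC ->].
  by have /setIP [] : point Q \in Q :&: Q0 by rewrite pointE ?set11.
by rewrite (cardsD1 Q0 (cover3s H)) Q0C.
Qed.

(* Heavy case: split H into the edges containing a hitting 3-set (at most four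
   such sets, each in at most deg3_bound edges) and the others (whose 3-subsets
   do not hit H, so each lies in at most r * deg4_bound of them). *)
Lemma card_le_heavy_cover3 (Q0 : {set 'I_n}) : 2 <= r ->
  (forall Q1 Q2 : {set 'I_n}, Q1 \in cover3s H -> Q2 \in cover3s H -> #|Q1 :&: Q2| != 2) ->
  Q0 \in cover3s H -> 4 * deg4_bound n r < codeg H Q0 -> #|H| <= sparse_bound n r.
Proof.
move=> r2 no2 Q0C heavy; have few := few_cover3s no2 Q0C heavy.
set marked := [set E in H | [exists Q in cover3s H, Q \subset E]].
set unmarked := [set E in H | ~~ [exists Q in cover3s H, Q \subset E]].
have sub_marked : marked \subset H by apply/subsetP => E; rewrite inE => /andP[].
have sub_unmarked : unmarked \subset H by apply/subsetP => E; rewrite inE => /andP[].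
have split_H : #|H| <= #|marked| + #|unmarked|.
  apply: leq_trans (leq_card_setU marked unmarked).1; apply: subset_leq_card.
  by apply/subsetP => E EH; rewrite !inE EH /=; case: [exists _ in _, _].
have card_marked : #|marked| <= 4 * deg3_bound n r.
  apply: leq_trans (_ : #|cover3s H| * deg3_bound n r <= _); last by rewrite leq_mul2r few orbT.
  apply: card_le_markers => [E|Q]; first by rewrite inE => /andP[_ /exists_inP [Q QC QE]]; exists Q.
  by rewrite inE => /andP[/eqP Q3 _]; apply: codeg3_le sub_marked Q3.
have card_unmarked : #|unmarked| <= r ^ 3 * (r * deg4_bound n r).
  apply: (card_le_codeg3 sub_unmarked) => Q Q3.
  have [hitQ|hitQ] := boolP (hitting H Q); last first.
    apply: leq_trans (codeg_not_hitting3 Q3 hitQ); apply: subset_leq_card.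
    by apply/subsetP => E; rewrite !inE => /andP[/andP[-> _] ->].
  suff -> : codeg unmarked Q = 0 by [].
  apply: eq_card0 => E; rewrite !inE; apply/negP => /andP[/andP[_ noQ] QE].
  by case/negP: noQ; apply/exists_inP; exists Q; rewrite // inE Q3 eqxx.
apply: leq_trans (leq_trans split_H (leq_add card_marked card_unmarked)) _.
rewrite /sparse_bound leq_add2l mulnA -expnSr leq_mul2r; apply/orP; right.
by rewrite leq_pmull.
Qed.

(* Light case: every hitting 3-set lies in at most 4 * deg4_bound edges and
   every other 3-set in at most r * deg4_bound. *)
Lemma card_le_light_cover3s : 2 <= r ->
  (forall Q : {set 'I_n}, Q \in cover3s H -> codeg H Q <= 4 * deg4_bound n r) ->
  #|H| <= sparse_bound n r.
Proof.
move=> r2 light.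
have : #|H| <= r ^ 3 * (4 * deg4_bound n r + r * deg4_bound n r).
  apply: (card_le_codeg3 (subxx H)) => Q Q3.
  have [hitQ|hitQ] := boolP (hitting H Q).
    by apply: leq_trans (leq_addr _ _); apply: light; rewrite inE Q3 eqxx.
  exact: leq_trans (codeg_not_hitting3 Q3 hitQ) (leq_addl _ _).
have r4 : r ^ 4 = r * r ^ 3 by rewrite expnS.
rewrite /sparse_bound r4; set u := deg4_bound n r; set q := r ^ 3; set B := deg3_bound n r.
by clearbody u q B; nia.
Qed.

Lemma cover3s_meet2 : 2 <= r -> sparse_bound n r < #|H| ->
  exists Q1 Q2 : {set 'I_n}, [/\ Q1 \in cover3s H, Q2 \in cover3s H & #|Q1 :&: Q2| = 2].
Proof.
move=> r2 big.
have [/exists_inP [Q1 Q1C /exists_inP [Q2 Q2C /eqP Q12]] | /exists_inP none] :=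
  boolP [exists Q1 in cover3s H, [exists Q2 in cover3s H, #|Q1 :&: Q2| == 2]].
  by exists Q1, Q2.
have no2 (Q1 Q2 : {set 'I_n}) : Q1 \in cover3s H -> Q2 \in cover3s H -> #|Q1 :&: Q2| != 2.
  by move=> Q1C Q2C; apply/negP => Q12; apply: none; exists Q1 => //; apply/exists_inP; exists Q2.
exfalso; move: big; rewrite ltnNge => /negP; apply.
have [/exists_inP [Q0 Q0C heavy] | /exists_inP light] :=
  boolP [exists Q0 in cover3s H, 4 * deg4_bound n r < codeg H Q0].
  exact: card_le_heavy_cover3 r2 no2 Q0C heavy.
apply: (card_le_light_cover3s r2) => Q QC; rewrite leqNgt.
by apply/negP => heavy; apply: light; exists Q.
Qed.

Section HittingQuad.

Variable Y : {set 'I_n}.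
Hypothesis HY : hitting_quad H Y.

(* Every edge meets Y in at least two vertices: the other three would form a
   hitting 3-set avoided by the edge. *)
Lemma edge_meets_quad (E : {set 'I_n}) : E \in H -> 2 <= #|E :&: Y|.
Proof.
have [Y4 hitY] := HY; move=> EH; rewrite leqNgt; apply/negP => lt.
have : 3 <= #|Y :\: E|.
  by rewrite cardsD Y4 setIC; move: lt; set k := #|E :&: Y|; clearbody k; lia.
case/exists_subset_card => T TYE T3.
have TY : T \subset Y by apply: subset_trans TYE (subsetDl _ _).
have /set0Pn [z] := (hittingP _ _ (hitY T TY T3)) E EH.
by rewrite inE => /andP[zE zT]; have := subsetP TYE z zT; rewrite inE zE.
Qed.

(* If R :|: P is an edge, with R outside Y and P a pair in Y, then replacing a
   point x of P by any other point w of Y gives an edge: apply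
   hitting3_completions to the hitting 3-set Y :\: (P :\ x). *)
Lemma quad_swap (R P : {set 'I_n}) x w :
  R \subset ~: Y -> P \subset Y -> #|P| = 2 ->
  R :|: P \in H -> x \in P -> w \in Y -> w \notin P -> R :|: (w |: (P :\ x)) \in H.
Proof.
have [Y4 hitY] := HY; move=> RY PY P2 RPH xP wY wP.
have xR : x \notin R.
  by apply/negP => xR; have := subsetP RY x xR; rewrite inE (subsetP PY x xP).
set C := Y :\: (P :\ x).
have C3 : #|C| = 3.
  rewrite cardsD Y4 (setIidPr _); last by apply: subset_trans (subD1set _ _) PY.
  by move: (cardsD1 x P); rewrite xP P2; lia.
have onlyx z : z \in C -> z \in R :|: P -> z = x.
  rewrite !inE => /andP[zPx zY] /orP[zR|zP]; first by have := subsetP RY z zR; rewrite inE zY.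
  by apply/eqP; move: zPx; rewrite zP andbT negbK.
have wC : w \in C by rewrite !inE wY (negbTE wP) andbF.
have xRP : x \in R :|: P by rewrite inE xP orbT.
have := hitting3_completions RPH xRP (hitY C (subsetDl _ _) C3) onlyx C3 wC.
congr (_ \in H); apply/setP => z; rewrite !inE.
by case: (z =P x) => [->|_] /=; rewrite ?(negbTE xR) ?orbF // orbCA.
Qed.

Lemma quad_swap_pair (R P P' : {set 'I_n}) :
  R \subset ~: Y -> P \subset Y -> P' \subset Y -> #|P| = 2 -> #|P'| = 2 ->
  #|P :&: P'| = 1 -> R :|: P \in H -> R :|: P' \in H.
Proof.
move=> RY PY P'Y P2 P'2 PP'1 RPH.
have /cards1P [x Px] : #|P :\: P'| == 1 by rewrite cardsD P2 PP'1.
have /cards1P [w P'w] : #|P' :\: P| == 1 by rewrite cardsD P'2 setIC PP'1.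
have /setDP [xP xP'] : x \in P :\: P' by rewrite Px set11.
have /setDP [wP' wP] : w \in P' :\: P by rewrite P'w set11.
suff <- : w |: (P :\ x) = P' by exact: quad_swap RY PY P2 RPH xP (subsetP P'Y w wP') wP.
apply/eqP; rewrite eqEcard cardsU1 P'2 !inE (negbTE wP) andbF /=.
have -> : #|P :\ x| = 1 by move: (cardsD1 x P); rewrite xP P2; lia.
rewrite andbT subUset sub1set wP' /=; apply/subsetP => z; rewrite !inE => /andP[zx zP].
apply/negPn/negP => zP'; have : z \in P :\: P' by rewrite inE zP zP'.
by rewrite Px inE (negbTE zx).
Qed.

(* Hence, once R :|: P is an edge for one pair P of Y, it is for every pair:
   two pairs are linked by at most two one-point swaps. *)
Lemma quad_all_pairs (R P : {set 'I_n}) :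
  R \subset ~: Y -> P \subset Y -> #|P| = 2 ->
  R :|: P \in H -> forall P' : {set 'I_n}, P' \subset Y -> #|P'| = 2 -> R :|: P' \in H.
Proof.
move=> RY PY P2 RPH P' P'Y P'2.
have : #|P :&: P'| <= 2 by rewrite -P2 subset_leq_card // subsetIl.
case PP': #|P :&: P'| => [|[|[|//]]] _;
  [| exact: quad_swap_pair RY PY P'Y P2 P'2 PP' RPH
   | by rewrite -(@eq_of_card_setI _ P P') ?P2 ?P'2 ?PP'].
move/eqP: PP'; rewrite cards_eq0 => /eqP PP'0.
have [y yP] : exists y, y \in P by apply/set0Pn; rewrite -card_gt0 P2.
have [z zP'] : exists z, z \in P' by apply/set0Pn; rewrite -card_gt0 P'2.
have disj u : u \in P -> u \in P' = false.
  move=> uP; apply/negP => uP'; have : u \in P :&: P' by rewrite inE uP uP'.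
  by rewrite PP'0 inE.
have zP : z \in P = false by apply/negP => zP; rewrite disj in zP'.
set P'' := [set y; z].
have P''Y : P'' \subset Y by rewrite subUset !sub1set (subsetP PY y yP) (subsetP P'Y z zP').
have yz : y != z by apply: contraFneq zP => <-.
have P''2 : #|P''| = 2 by rewrite cards2 yz.
have PP''1 : #|P :&: P''| = 1.
  apply/eqP/cards1P; exists y; apply/setP => t; rewrite !inE.
  by case: (t =P y) => [->|_]; [rewrite yP | case: (t =P z) => [->|_]; rewrite ?zP ?andbF].
have P''P'1 : #|P'' :&: P'| = 1.
  apply/eqP/cards1P; exists z; apply/setP => t; rewrite !inE.
  case: (t =P z) => [->|_]; first by rewrite orbT zP'.
  by case: (t =P y) => [->|_]; rewrite ?(disj y yP).
have RP''H := quad_swap_pair RY PY P''Y P2 P''2 PP''1 RPH.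
exact: quad_swap_pair RY P''Y P'Y P''2 P'2 P''P'1 RP''H.
Qed.

Lemma quad_has_pair : exists2 P : {set 'I_n}, P \subset Y & #|P| = 2.
Proof. by have [Y4 _] := HY; apply: exists_subset_card; rewrite Y4. Qed.

Definition quad_rests := [set E :\: Y | E in [set E in H | #|E :&: Y| == 2]].

Lemma mem_quad_rests (E : {set 'I_n}) :
  E \in H -> #|E :&: Y| = 2 -> E :\: Y \in quad_rests.
Proof. by move=> EH EY2; apply/imsetP; exists E; rewrite // inE EH EY2 eqxx. Qed.

Lemma quad_restP (R : {set 'I_n}) : R \in quad_rests ->
  [/\ R \subset ~: Y, #|R| <= r & forall P : {set 'I_n}, P \subset Y -> #|P| = 2 -> R :|: P \in H].
Proof.
case/imsetP => E; rewrite inE => /andP[EH /eqP EY2] ->.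
have RY : E :\: Y \subset ~: Y by apply/subsetP => z; rewrite !inE => /andP[].
split => //; first by rewrite -(adm_uniform HA EH) subset_leq_card // subsetDl.
by apply: quad_all_pairs RY (subsetIr E Y) EY2 _; rewrite setUC setID.
Qed.

(* Any two rests meet: complete them by complementary pairs of Y. *)
Lemma quad_rests_meet (R R' : {set 'I_n}) :
  R \in quad_rests -> R' \in quad_rests -> exists2 z, z \in R & z \in R'.
Proof.
have [Y4 _] := HY; move=> /quad_restP [RY _ RP] /quad_restP [R'Y _ R'P].
have [P PY P2] := quad_has_pair.
have P'2 : #|Y :\: P| = 2 by rewrite cardsD Y4 (setIidPr PY) P2.
have /set0Pn [z] := adm_intersecting HA (RP P PY P2) (R'P _ (subsetDl Y P) P'2).
rewrite !inE => /andP[/orP[zR|zP] /orP[zR'|/andP[zP' zY]]]; first by exists z.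
- by have := subsetP RY z zR; rewrite inE zY.
- by have := subsetP R'Y z zR'; rewrite inE (subsetP PY z zP).
- by rewrite zP in zP'.
Qed.

(* Some edge avoids a given pair of Y (pairs do not hit H), so it meets Y in
   exactly the complementary pair. *)
Lemma quad_rests_nonempty : exists R : {set 'I_n}, R \in quad_rests.
Proof.
have [Y4 _] := HY.
have [P PY P2] := quad_has_pair.
have : ~~ hitting H P by apply/negP => /hitting_card_ge3; rewrite P2.
case/not_hittingP => E EH EP; exists (E :\: Y); apply: mem_quad_rests => //.
have sub : E :&: Y \subset Y :\: P.
  apply/subsetP => z; rewrite !inE => /andP[zE ->]; rewrite andbT.
  exact: notin_disjoint EP zE.
have := subset_leq_card sub; rewrite cardsD Y4 (setIidPr PY) P2.
by have := edge_meets_quad EH; set k := #|E :&: Y|; clearbody k; lia.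
Qed.

Lemma kernel_of_common_rest_point (e : 'I_n) :
  (forall R : {set 'I_n}, R \in quad_rests -> e \in R) ->
  #|e |: Y| = 5 /\ forall E, E \in H -> 3 <= #|E :&: (e |: Y)|.
Proof.
have [Y4 _] := HY; move=> common.
have [R1 R1rest] := quad_rests_nonempty.
have eY : e \notin Y.
  by have [R1Y _ _] := quad_restP R1rest; have := subsetP R1Y e (common R1 R1rest); rewrite inE.
split => [|E EH]; first by rewrite cardsU1 eY Y4.
have [EY3|EY2] := leqP 3 #|E :&: Y|.
  by apply: leq_trans EY3 _; apply: subset_leq_card; apply: setIS; apply: subsetUr.
have {}EY2 : #|E :&: Y| = 2.
  by move: (edge_meets_quad EH) EY2; set k := #|E :&: Y|; clearbody k; lia.
have /setDP [eE _] := common _ (mem_quad_rests EH EY2).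
have sub : e |: (E :&: Y) \subset E :&: (e |: Y).
  by rewrite subUset sub1set !inE eE eqxx /= setIS // subsetUr.
by apply: leq_trans (subset_leq_card sub); rewrite cardsU1 EY2 inE (negbTE eY) andbF.
Qed.

(* Without a common point, an edge through a pair P of Y meeting Y only in P
   meets a rest R1 (in some x) and a rest Rx avoiding x (in some y), so it
   contains the 4-set {x, y} :|: P. *)
Lemma codeg_pair_no_common_point (P : {set 'I_n}) :
  (forall x : 'I_n, exists2 R : {set 'I_n}, R \in quad_rests & x \notin R) ->
  P \subset Y -> #|P| = 2 ->
  codeg [set E in H | #|E :&: Y| == 2] P <= r * (r * deg4_bound n r).
Proof.
move=> avoid PY P2; set G2 := [set E in H | #|E :&: Y| == 2].
have G2H : G2 \subset H by apply/subsetP => E; rewrite inE => /andP[].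
have meets R E : R \in quad_rests -> E \in G2 -> exists2 z, z \in R & z \in E.
  move=> Rrest; rewrite inE => /andP[EH /eqP EY2].
  have [z zE zR] := quad_rests_meet (mem_quad_rests EH EY2) Rrest.
  by exists z => //; move: zE => /setDP [].
have [R1 R1rest] := quad_rests_nonempty; have [R1Y R1r _] := quad_restP R1rest.
apply: leq_trans (_ : #|R1| * (r * deg4_bound n r) <= _); last by rewrite leq_mul2r R1r orbT.
apply: card_le_branch => [E EG2 _|x xR1]; first exact: meets R1rest EG2.
have [Rx Rxrest xRx] := avoid x; have [RxY Rxr _] := quad_restP Rxrest.
apply: leq_trans (_ : #|Rx| * deg4_bound n r <= _); last by rewrite leq_mul2r Rxr orbT.
apply: card_le_branch => [E EG2 _|y yRx]; first exact: meets Rxrest EG2.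
apply: (codeg4_le G2H).
have xP : x \notin P.
  by apply/negP => xP; have := subsetP R1Y x xR1; rewrite inE (subsetP PY x xP).
have yP : y \notin P.
  by apply/negP => yP; have := subsetP RxY y yRx; rewrite inE (subsetP PY y yP).
have yx : y != x by apply: contraNneq xRx => <-.
by rewrite cardsU1 cardsU1 xP P2 !inE (negbTE yx) (negbTE yP).
Qed.

(* Without a common point H is small: edges meeting Y in >= 3 vertices contain
   one of its four 3-subsets; the others contain one of its six pairs. *)
Lemma card_le_no_common_point : 2 <= r ->
  (forall x : 'I_n, exists2 R : {set 'I_n}, R \in quad_rests & x \notin R) ->
  #|H| <= sparse_bound n r.
Proof.
have [Y4 _] := HY; move=> r2 avoid.
set G3 := [set E in H | 3 <= #|E :&: Y|].
set G2 := [set E in H | #|E :&: Y| == 2].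
have G3H : G3 \subset H by apply/subsetP => E; rewrite inE => /andP[].
have split_H : #|H| <= #|G3| + #|G2|.
  apply: leq_trans (leq_card_setU G3 G2).1; apply: subset_leq_card.
  apply/subsetP => E EH; rewrite !inE EH /=.
  by have := edge_meets_quad EH; case: (leqP 3 #|E :&: Y|) => //= ? ?; apply/eqP; lia.
have card_G3 : #|G3| <= 4 * deg3_bound n r.
  have -> : 4 = #|[set T : {set 'I_n} | T \subset Y & #|T| == 3]| by rewrite cards_draws Y4.
  apply: card_le_markers => [E|T].
    rewrite inE => /andP[EH /exists_subset_card [T TEY T3]].
    exists T; last exact: subset_trans TEY (subsetIl _ _).
    by rewrite inE T3 eqxx andbT (subset_trans TEY (subsetIr _ _)).
  by rewrite inE => /andP[_ /eqP T3]; apply: codeg3_le G3H T3.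
have card_G2 : #|G2| <= 6 * (r * (r * deg4_bound n r)).
  have -> : 6 = #|[set P : {set 'I_n} | P \subset Y & #|P| == 2]| by rewrite cards_draws Y4.
  apply: card_le_markers => [E|P].
    by rewrite inE => /andP[EH EY2]; exists (E :&: Y); rewrite ?subsetIl // inE subsetIr EY2.
  by rewrite inE => /andP[PY /eqP P2]; apply: codeg_pair_no_common_point.
apply: leq_trans (leq_trans split_H (leq_add card_G3 card_G2)) _.
have r4 : r ^ 4 = r * r * (r * r) by rewrite !expnS expn0 muln1 !mulnA.
rewrite /sparse_bound r4 leq_add2l !mulnA.
have : 4 <= r * r by nia.
by set u := deg4_bound n r; set q := r * r; clearbody u q; nia.
Qed.

Lemma kernel_of_hitting_quad : 2 <= r -> sparse_bound n r < #|H| ->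
  exists X : {set 'I_n}, #|X| = 5 /\ forall E, E \in H -> 3 <= #|E :&: X|.
Proof.
move=> r2 big.
have [/existsP [e /forall_inP common] | no_common] :=
  boolP [exists e, [forall R in quad_rests, e \in R]].
  by exists (e |: Y); apply: kernel_of_common_rest_point.
exfalso; move: big; rewrite ltnNge => /negP; apply.
apply: (card_le_no_common_point r2) => x.
move: no_common; rewrite negb_exists => /forallP /(_ x).
by rewrite negb_forall_in => /exists_inP [R Rrest xR]; exists R.
Qed.

End HittingQuad.

Lemma admissible_kernel : 2 <= r -> sparse_bound n r < #|H| ->
  exists X : {set 'I_n}, #|X| = 5 /\ forall E, E \in H -> 3 <= #|E :&: X|.
Proof.
move=> r2 big; have [Q1 [Q2 [Q1C Q2C Q12]]] := cover3s_meet2 r2 big.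
exact: kernel_of_hitting_quad (hitting_quad_of_pair Q1C Q2C Q12) r2 big.
Qed.

End AdmissibleFamily.

Theorem theorem9 (r n : nat) (H : hypergraph n) :
  3 <= r -> 2 * r ^ 5 <= n ->
  uniform r H -> intersecting H -> 3 <= min_pos_codeg r H ->
  (forall H' : hypergraph n,
      uniform r H' -> intersecting H' -> 3 <= min_pos_codeg r H' ->
      #|H'| <= #|H|) ->
  kernel_system r 3 H.
Proof.
move=> r3 rn unifH intH codH maxH.
have HA := admissible_of_min_pos_codeg unifH intH codH.
have rn2 : r + 2 <= n.
  have : r ^ 1 <= r ^ 5 by rewrite leq_pexp2l //; lia.
  lia.
have kernel_le (X : {set 'I_n}) : #|X| = 5 -> #|kernel3 r X| <= #|H|.
  by move=> X5; have [] := kernel3_competitor r3 X5 rn2; apply: maxH.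
have [X0 _ X05] : exists2 X0 : {set 'I_n}, X0 \subset setT & #|X0| = 5.
  by apply: exists_subset_card; rewrite cardsT card_ord; lia.
have big : sparse_bound n r < #|H|.
  exact: leq_trans (sparse_bound_lt r3 rn) (leq_trans (kernel3_card r3 X05) (kernel_le X0 X05)).
have [X [X5 EX]] := admissible_kernel HA (ltnW r3) big.
exists X; split => //; apply/eqP; rewrite eqEcard kernel_le // andbT.
by apply/subsetP => E EH; rewrite inE (adm_uniform HA EH) eqxx EX.
Qed.
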